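(* For any frame $L$, $\overline{\mathrm{H}}(L)$ is order-isomorphic to $\overline{\mathrm{C}}(\mathfrak{B}(L))$.
   Context: $\mathbb{Q}$ is the rationals; $a^\ast$ is the pseudocomplement. $\mathfrak{B}(L)=\{a\in L\mid a=a^{\ast\ast}\}$ is the Booleanization of $L$, a complete Boolean algebra (a frame). The frame $\mathfrak{L}(\overline{\mathbb{IR}})$ is presented by generators $(r,\textsf{---})$, $(\textsf{---},s)$ ($r,s\in\mathbb{Q}$) subject to (r1) $(r,\textsf{---})\wedge(\textsf{---},s)=0$ whenever $r\ge s$; (r3) $(r,\textsf{---})=\bigvee_{s>r}(s,\textsf{---})$; (r4) $(\textsf{---},s)=\bigvee_{r<s}(\textsf{---},r)$. For a frame $M$, $\overline{\mathrm{IC}}(M)$ is the set of frame homomorphisms $\mathfrak{L}(\overline{\mathbb{IR}})\to M$, ordered by $f\le g$ iff $f(r,\textsf{---})\le g(r,\textsf{---})$ and $g(\textsf{---},s)\le f(\textsf{---},s)$ for all $r,s$; $\overline{\mathrm{C}}(M)$ is the subposet of those $f$ with $f(r,\textsf{---})\vee f(\textsf{---},s)=1$ whenever $r<s$; $\overline{\mathrm{H}}(M)$ is the subposet of those $f$ with $f(r,\textsf{---})^\ast\le f(\textsf{---},s)$ and $f(\textsf{---},s)^\ast\le f(r,\textsf{---})$ whenever $r<s$. *)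

From mathcomp Require Import all_boot all_order all_algebra.
Set Implicit Arguments. Unset Strict Implicit. Unset Printing Implicit Defensive.
Import Order.TTheory GRing.Theory Num.Theory.
Local Open Scope ring_scope.

Record FrameOps := {
  fcar :> Type;
  fle : fcar -> fcar -> Prop;
  fsup : (fcar -> Prop) -> fcar;
  fmeet : fcar -> fcar -> fcar }.
Arguments fle {f}. Arguments fsup {f}. Arguments fmeet {f}.

Definition is_frame (L : FrameOps) : Prop :=
  (forall a : L, fle a a) /\
  (forall a b : L, fle a b -> fle b a -> a = b) /\
  (forall a b c : L, fle a b -> fle b c -> fle a c) /\
  (forall (S : L -> Prop) a, S a -> fle a (fsup S)) /\
  (forall (S : L -> Prop) b, (forall a, S a -> fle a b) -> fle (fsup S) b) /\
  (forall a b : L, fle (fmeet a b) a /\ fle (fmeet a b) b) /\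
  (forall a b c : L, fle c a -> fle c b -> fle c (fmeet a b)) /\
  (forall (a : L) (S : L -> Prop),
      fmeet a (fsup S) = fsup (fun y => exists2 s, S s & y = fmeet a s)).

Record Frame := { fops :> FrameOps; fframe : is_frame fops }.

Section Derived.
Variable L : FrameOps.
Definition ftop : L := fsup (fun _ => True).
Definition fbot : L := fsup (fun _ => False).
Definition fjoin (a b : L) : L := fsup (fun x => x = a \/ x = b).
Definition pc (a : L) : L := fsup (fun x => fmeet a x = fbot).
End Derived.
Arguments ftop {L}. Arguments fbot {L}.

Section Facts.
Variable L : Frame.
Let H := fframe L.
Lemma f_refl (a : L) : fle a a. Proof. by case: H => h _; apply: h. Qed.
Lemma f_anti (a b : L) : fle a b -> fle b a -> a = b. Proof. by case: H => _ [h _]; apply: h. Qed.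
Lemma f_trans (a b c : L) : fle a b -> fle b c -> fle a c.
Proof. by case: H => _ [_ [h _]]; apply: h. Qed.
Lemma f_ub (S : L -> Prop) a : S a -> fle a (fsup S).
Proof. by case: H => _ [_ [_ [h _]]]; apply: h. Qed.
Lemma f_lub (S : L -> Prop) b : (forall a, S a -> fle a b) -> fle (fsup S) b.
Proof. by case: H => _ [_ [_ [_ [h _]]]]; apply: h. Qed.
Lemma f_meetl (a b : L) : fle (fmeet a b) a. Proof. by case: H => _ [_ [_ [_ [_ [h _]]]]]; case: (h a b). Qed.
Lemma f_meetr (a b : L) : fle (fmeet a b) b. Proof. by case: H => _ [_ [_ [_ [_ [h _]]]]]; case: (h a b). Qed.
Lemma f_glb (a b c : L) : fle c a -> fle c b -> fle c (fmeet a b).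
Proof. by case: H => _ [_ [_ [_ [_ [_ [h _]]]]]]; apply: h. Qed.
Lemma f_distr (a : L) (S : L -> Prop) :
  fmeet a (fsup S) = fsup (fun y => exists2 s, S s & y = fmeet a s).
Proof. by case: H => _ [_ [_ [_ [_ [_ [_ h]]]]]]. Qed.

Lemma f_bot_le (a : L) : fle fbot a. Proof. by apply: f_lub. Qed.
Lemma f_meetC (a b : L) : fmeet a b = fmeet b a.
Proof. by apply: f_anti; apply: f_glb; [apply: f_meetr|apply: f_meetl|apply: f_meetr|apply: f_meetl]. Qed.

Lemma f_meet_pc (a : L) : fmeet a (pc a) = fbot.
Proof.
rewrite /pc f_distr; apply: f_anti; last exact: f_bot_le.
by apply: f_lub => y [s hs ->]; rewrite hs; apply: f_refl.
Qed.
Lemma f_pc_le (a x : L) : fmeet a x = fbot -> fle x (pc a). Proof. exact: f_ub. Qed.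
Lemma f_le_pcpc (a : L) : fle a (pc (pc a)).
Proof. by apply: f_pc_le; rewrite f_meetC f_meet_pc. Qed.
Lemma f_pc_anti (a b : L) : fle a b -> fle (pc b) (pc a).
Proof.
move=> hab; apply: f_lub => x hx; apply: f_pc_le; apply: f_anti; last exact: f_bot_le.
rewrite -hx; apply: f_glb; last exact: f_meetr.
exact: f_trans (f_meetl _ _) hab.
Qed.
Lemma f_pc3 (a : L) : pc (pc (pc a)) = pc a.
Proof. by apply: f_anti; [apply: f_pc_anti; apply: f_le_pcpc | apply: f_le_pcpc]. Qed.
Lemma f_meet_reg (a b : L) : a = pc (pc a) -> b = pc (pc b) ->
  fmeet a b = pc (pc (fmeet a b)).
Proof.
move=> ha hb; apply: f_anti; first exact: f_le_pcpc.
apply: f_glb.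
  by rewrite {2}ha; do 2 apply: f_pc_anti; apply: f_meetl.
by rewrite {2}hb; do 2 apply: f_pc_anti; apply: f_meetr.
Qed.
End Facts.

Section Booleanization.
Variable L : Frame.
Definition BCar := {a : L | a = pc (pc a)}.
Definition Bsup (S : BCar -> Prop) : BCar :=
  let X := fsup (fun x => exists2 b : BCar, S b & x = sval b) in
  exist _ (pc (pc X)) (esym (f_pc3 (pc X))).
Definition Bmeet (a b : BCar) : BCar :=
  exist _ (fmeet (sval a) (sval b)) (f_meet_reg (svalP a) (svalP b)).
Definition Booleanization : FrameOps :=
  {| fcar := BCar; fle := fun a b => fle (sval a) (sval b);
     fsup := Bsup; fmeet := Bmeet |}.
End Booleanization.

(* Frame homomorphisms L(IR-bar) -> M.  By the universal property of  *)
(* the presentation, such a homomorphism f is the same as the pair of *)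
(* generator images  lo r = f(r,---),  up s = f(---,s)  satisfying    *)
(* (r1), (r3), (r4) in M.                                             *)
Record GenMap (M : FrameOps) := { lo : rat -> M; up : rat -> M }.

Definition is_IC (M : FrameOps) (f : GenMap M) : Prop :=
  [/\ (forall r s : rat, s <= r -> fmeet (lo f r) (up f s) = fbot),
      (forall r : rat, lo f r = fsup (fun x => exists2 s : rat, r < s & x = lo f s)) &
      (forall s : rat, up f s = fsup (fun x => exists2 r : rat, r < s & x = up f r))].

Definition is_C (M : FrameOps) (f : GenMap M) : Prop :=
  is_IC f /\ (forall r s : rat, r < s -> fjoin (lo f r) (up f s) = ftop).

Definition is_H (M : FrameOps) (f : GenMap M) : Prop :=
  is_IC f /\ (forall r s : rat, r < s ->
     fle (pc (lo f r)) (up f s) /\ fle (pc (up f s)) (lo f r)).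

Definition ic_le (M : FrameOps) (f g : GenMap M) : Prop :=
  (forall r : rat, fle (lo f r) (lo g r)) /\ (forall s : rat, fle (up g s) (up f s)).

Definition ICbar (M : FrameOps) := {f : GenMap M | is_IC f}.
Definition Cbar (M : FrameOps) := {f : GenMap M | is_C f}.
Definition Hbar (M : FrameOps) := {f : GenMap M | is_H f}.

Definition Cbar_le (M : FrameOps) (f g : Cbar M) := ic_le (sval f) (sval g).
Definition Hbar_le (M : FrameOps) (f g : Hbar M) := ic_le (sval f) (sval g).

Definition order_iso (A B : Type) (leA : A -> A -> Prop) (leB : B -> B -> Prop) : Prop :=
  exists (f : A -> B) (g : B -> A),
    [/\ cancel f g, cancel g f & forall x y, leA x y <-> leB (f x) (f y)].

From mathcomp Require Import all_boot all_order all_algebra.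
From Stdlib Require Import ProofIrrelevance FunctionalExtensionality.
Set Implicit Arguments. Unset Strict Implicit. Unset Printing Implicit Defensive.
Import Order.TTheory GRing.Theory Num.Theory.
Local Open Scope ring_scope.

(* For f in H(L) we have f(s,---) /\ f(---,s) = 0 and f(---,s)^* <= f(r,---)
   when r < s, so f(s,---)^** <= f(r,---); by (r3) this gives
   f(r,---) = \/_{s>r} f(s,---)^**, and dually for f(---,s).  Hence f is
   recovered from its composite with a |-> a^** : L -> B(L), which lands in
   C(B(L)) because (a \/ b)^** = 1 iff a^* /\ b^* = 0.  Conversely g in C(B(L))
   is sent to r |-> \/_{s>r} g(s,---) computed in L: its double
   pseudocomplement is the join of the g(s,---) in B(L), i.e. g(r,---). *)

Section FrameFacts.
Variable L : Frame.
Implicit Types a b : L.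

Lemma f_le_bot_eq a : fle a fbot -> a = fbot.
Proof. by move=> h; apply: f_anti h (f_bot_le _). Qed.

Lemma f_le_top a : fle a ftop.
Proof. exact: (@f_ub L (fun _ => True)). Qed.

Lemma f_meet_topl a : fmeet ftop a = a.
Proof. by apply: f_anti; [exact: f_meetr | apply: f_glb; [exact: f_le_top | exact: f_refl]]. Qed.

Lemma f_le_pcE a b : fle a (pc b) <-> fmeet a b = fbot.
Proof.
split=> [h | h]; last by apply: f_pc_le; rewrite f_meetC.
apply: f_le_bot_eq; rewrite -(f_meet_pc b).
by apply: f_glb; [exact: f_meetr | exact: f_trans (f_meetl _ _) h].
Qed.

Lemma f_pc_bot : pc (fbot : L) = ftop.
Proof. by apply: f_anti; [exact: f_le_top | apply/f_le_pcE; rewrite f_meet_topl]. Qed.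

Lemma f_pc_top : pc (ftop : L) = fbot.
Proof. by rewrite -[RHS](f_meet_pc ftop) f_meet_topl. Qed.

Lemma f_pcpc_le_pc a b : fle a (pc b) -> fle (pc (pc a)) (pc b).
Proof. by move=> h; rewrite -(f_pc3 b); do 2 apply: f_pc_anti. Qed.

Lemma f_pcpc_mono a b : fle a b -> fle (pc (pc a)) (pc (pc b)).
Proof. by move=> h; do 2 apply: f_pc_anti. Qed.

Lemma f_pcpc_meet_eq0 a b : fmeet a b = fbot -> fmeet (pc (pc a)) (pc (pc b)) = fbot.
Proof. by move/f_le_pcE/f_pcpc_le_pc => h; apply/f_le_pcE; rewrite f_pc3. Qed.

Lemma f_pcpc_eq_top a : pc (pc a) = ftop <-> pc a = fbot.
Proof. by split=> h; [rewrite -f_pc3 h f_pc_top | rewrite h f_pc_bot]. Qed.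

Lemma f_join_l a b : fle a (fjoin a b). Proof. by apply: f_ub; left. Qed.
Lemma f_join_r a b : fle b (fjoin a b). Proof. by apply: f_ub; right. Qed.

Lemma f_pc_join a b : pc (fjoin a b) = fmeet (pc a) (pc b).
Proof.
apply: f_anti; first by apply: f_glb; apply: f_pc_anti; [exact: f_join_l | exact: f_join_r].
apply/f_le_pcE/f_le_bot_eq; rewrite f_distr; apply: f_lub => _ [_ [-> | ->] ->].
  by have /f_le_pcE -> := f_meetl (pc a) (pc b); apply: f_refl.
by have /f_le_pcE -> := f_meetr (pc a) (pc b); apply: f_refl.
Qed.

Lemma f_pcpc_join_eq_top a b : pc (pc (fjoin a b)) = ftop <-> fmeet (pc a) (pc b) = fbot.
Proof. by rewrite -f_pc_join; exact: f_pcpc_eq_top. Qed.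

Lemma f_meet_pc_pc a b : fle (pc a) b -> fmeet (pc a) (pc b) = fbot.
Proof. by move=> h; apply/f_le_pcE; exact: f_trans h (f_le_pcpc b). Qed.

Lemma f_pc_le_regular a b :
  b = pc (pc b) -> fmeet (pc a) (pc b) = fbot -> fle (pc a) b.
Proof. by move=> hb /f_le_pcE; rewrite -hb. Qed.

Lemma f_sup_le (S T : L -> Prop) :
  (forall z, S z -> exists2 w, T w & fle z w) -> fle (fsup S) (fsup T).
Proof. by move=> h; apply: f_lub => z /h [w tw hw]; exact: f_trans hw (f_ub tw). Qed.

Lemma f_meet_sups_eq0 (S T : L -> Prop) :
  (forall x y, S x -> T y -> fmeet x y = fbot) -> fmeet (fsup S) (fsup T) = fbot.
Proof.
move=> h; apply: f_le_bot_eq; rewrite f_distr; apply: f_lub => _ [t ht ->].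
rewrite f_meetC f_distr; apply: f_lub => _ [s hs ->].
by rewrite f_meetC (h _ _ hs ht); apply: f_refl.
Qed.

End FrameFacts.

Lemma sig_val_inj (T : Type) (P : T -> Prop) (x y : sig P) : sval x = sval y -> x = y.
Proof. exact: eq_sig_hprop (fun _ _ _ => proof_irrelevance _ _ _) x y. Qed.

Section BooleanizationFacts.
Variable L : Frame.
Local Notation B := (Booleanization L).

Definition booleanize (a : L) : B := exist _ (pc (pc a)) (esym (f_pc3 (pc a))).

Lemma Bval_bot : sval (fbot : B) = fbot.
Proof.
rewrite /fbot /=.
have -> : fsup (fun x : L => exists2 b : B, False & x = sval b) = fbot.
  by apply: f_anti; [apply: f_lub => ? [? []] | exact: f_bot_le].
by rewrite f_pc_bot f_pc_top.
Qed.

Lemma Bval_top : sval (ftop : B) = ftop.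
Proof.
apply: f_anti; first exact: f_le_top.
have top_reg : (ftop : L) = pc (pc ftop) by rewrite f_pc_top f_pc_bot.
by apply: f_trans (f_le_pcpc _); apply: f_ub; exists (exist _ ftop top_reg).
Qed.

Lemma Bval_join (x y : B) : sval (fjoin x y) = pc (pc (fjoin (sval x) (sval y))).
Proof.
congr (pc (pc _)); apply: f_anti; apply: f_sup_le.
  by move=> _ [b [-> | ->] ->]; [exists (sval x); [left | apply: f_refl]
                                | exists (sval y); [right | apply: f_refl]].
by move=> _ [-> | ->]; [exists (sval x); [exists x; [left |] | apply: f_refl]
                        | exists (sval y); [exists y; [right |] | apply: f_refl]].
Qed.

Lemma Bjoin_eq_top (x y : B) :
  fjoin x y = ftop <-> fmeet (pc (sval x)) (pc (sval y)) = fbot.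
Proof.
split=> [e | /f_pcpc_join_eq_top e].
  by apply/f_pcpc_join_eq_top; rewrite -Bval_join e Bval_top.
by apply: sig_val_inj; rewrite Bval_join e Bval_top.
Qed.

End BooleanizationFacts.

Definition rounded (M : FrameOps) (R : rel rat) (a : rat -> M) : Prop :=
  forall x, a x = fsup (fun z => exists2 y, R x y & z = a y).

Section Rounded.
Variables (L : Frame) (R : rel rat).
Local Notation B := (Booleanization L).

Definition lsup_after (a : rat -> B) (x : rat) : L :=
  fsup (fun z => exists2 y, R x y & z = sval (a y)).

Lemma lsup_after_ge (a : rat -> B) x y : R x y -> fle (sval (a y)) (lsup_after a x).
Proof. by move=> rxy; apply: f_ub; exists y. Qed.

Lemma lsup_after_mono (a b : rat -> B) x :
  (forall y, fle (sval (a y)) (sval (b y))) -> fle (lsup_after a x) (lsup_after b x).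
Proof.
by move=> h; apply: f_sup_le => _ [y rxy ->]; exists (sval (b y)); [exists y | exact: h].
Qed.

Lemma booleanize_rounded (a : rat -> L) :
  rounded R a -> rounded R (fun x => booleanize (a x)).
Proof.
move=> ra x; apply: sig_val_inj => /=; set X := fsup _.
have le_aX : fle (a x) X.
  rewrite (ra x); apply: f_sup_le => _ [y rxy ->].
  by exists (pc (pc (a y))); [exists (booleanize (a y)) => //; exists y | exact: f_le_pcpc].
have le_X : fle X (pc (pc (a x))).
  apply: f_lub => _ [_ [y rxy ->] ->]; apply: f_pcpc_mono.
  by rewrite (ra x); apply: f_ub; exists y.
apply: f_anti; first exact: f_pcpc_mono.
by rewrite -(f_pc3 (pc (a x))); exact: f_pcpc_mono.
Qed.

Lemma booleanize_lsup_after (a : rat -> B) :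
  rounded R a -> forall x, booleanize (lsup_after a x) = a x.
Proof.
move=> ra x; apply: sig_val_inj; rewrite [in RHS]ra /=; congr (pc (pc _)).
apply: f_anti; apply: f_sup_le.
  by move=> _ [y rxy ->]; exists (sval (a y)); [exists (a y) => //; exists y | exact: f_refl].
by move=> _ [_ [y rxy ->] ->]; exists (sval (a y)); [exists y | exact: f_refl].
Qed.

Lemma lsup_after_booleanize (a b : rat -> L) :
  rounded R a -> (forall y, fmeet (a y) (b y) = fbot) ->
  (forall x y, R x y -> fle (pc (b y)) (a x)) ->
  forall x, lsup_after (fun y => booleanize (a y)) x = a x.
Proof.
move=> ra ab0 pcb_le x; apply: f_anti.
  apply: f_lub => _ [y rxy ->]; apply: f_trans (pcb_le _ _ rxy).
  exact/f_pcpc_le_pc/f_le_pcE/ab0.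
rewrite {1}ra; apply: f_sup_le => _ [y rxy ->].
by exists (pc (pc (a y))); [exists y | exact: f_le_pcpc].
Qed.

Hypothesis R_trans : transitive R.
Hypothesis R_dense : forall x z, R x z -> exists2 y, R x y & R y z.

Lemma lsup_after_rounded (a : rat -> B) : rounded R (lsup_after a).
Proof.
move=> x; apply: f_anti.
  apply: f_lub => _ [t rxt ->]; have [s rxs rst] := R_dense rxt.
  by apply: f_trans (lsup_after_ge a rst) _; apply: f_ub; exists s.
apply: f_lub => _ [s rxs ->]; apply: f_lub => _ [t rst ->].
exact: lsup_after_ge (R_trans rxs rst).
Qed.

End Rounded.

Lemma rat_lt_dense (x z : rat) : x < z -> exists2 y, x < y & y < z.
Proof. by move=> /midf_lt [? ?]; exists ((x + z) / 2). Qed.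

Lemma rat_gt_trans : transitive (>%R : rel rat).
Proof. by move=> y x z xy yz; exact: lt_trans yz xy. Qed.

Lemma rat_gt_dense (x z : rat) : x > z -> exists2 y, x > y & y > z.
Proof. by move=> /rat_lt_dense [y ? ?]; exists y. Qed.

Lemma genmap_ext (M : FrameOps) (f g : GenMap M) :
  (forall r, lo f r = lo g r) -> (forall s, up f s = up g s) -> f = g.
Proof.
by case: f g => lf uf [lg ug] /= /functional_extensionality -> /functional_extensionality ->.
Qed.

Section Isomorphism.
Variable L : Frame.
Local Notation B := (Booleanization L).

Definition booleanize_genmap (h : GenMap L) : GenMap B :=
  {| lo := fun r => booleanize (lo h r); up := fun s => booleanize (up h s) |}.

Definition lsup_genmap (g : GenMap B) : GenMap L :=
  {| lo := lsup_after <%R (lo g); up := lsup_after >%R (up g) |}.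

Lemma is_C_booleanize_genmap (h : GenMap L) : is_H h -> is_C (booleanize_genmap h).
Proof.
case=> [[r1 r3 r4] hH]; split; first split.
- by move=> r s sr; apply: sig_val_inj; rewrite Bval_bot; apply: f_pcpc_meet_eq0; exact: r1.
- exact: booleanize_rounded r3.
- exact: (booleanize_rounded (R := >%R)) r4.
- move=> r s rs; apply/Bjoin_eq_top; rewrite /= !f_pc3.
  exact/f_meet_pc_pc/(proj1 (hH _ _ rs)).
Qed.

Lemma is_H_lsup_genmap (g : GenMap B) : is_C g -> is_H (lsup_genmap g).
Proof.
case=> [[r1 _ _] hC]; split; first split.
- move=> r s sr; apply: f_meet_sups_eq0 => _ _ [a ra ->] [b bs ->].
  have ba : b <= a by rewrite ltW // (lt_trans bs) // (le_lt_trans sr).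
  by rewrite -Bval_bot -(r1 _ _ ba).
- exact: (@lsup_after_rounded L <%R lt_trans rat_lt_dense).
- exact: (@lsup_after_rounded L >%R rat_gt_trans rat_gt_dense).
- move=> r s rs /=.
  have [t rt ts] := rat_lt_dense rs; have [u tu us] := rat_lt_dense ts.
  have /Bjoin_eq_top disj := hC _ _ tu.
  have le_lo := @lsup_after_ge _ <%R (lo g) r t rt.
  have le_up := @lsup_after_ge _ >%R (up g) s u us.
  split.
    apply: f_trans (f_pc_anti le_lo) _; apply: f_trans _ le_up.
    exact: f_pc_le_regular (svalP (up g u)) disj.
  apply: f_trans (f_pc_anti le_up) _; apply: f_trans _ le_lo.
  by apply: f_pc_le_regular (svalP (lo g t)) _; rewrite f_meetC.
Qed.

Definition Hbar_to_Cbar (h : Hbar L) : Cbar B :=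
  exist _ (booleanize_genmap (sval h)) (is_C_booleanize_genmap (svalP h)).
Definition Cbar_to_Hbar (g : Cbar B) : Hbar L :=
  exist _ (lsup_genmap (sval g)) (is_H_lsup_genmap (svalP g)).

Lemma Hbar_to_CbarK : cancel Hbar_to_Cbar Cbar_to_Hbar.
Proof.
case=> h hH; apply: sig_val_inj => /=; case: hH => [[r1 r3 r4] hH].
apply: genmap_ext => r /=.
- apply: (lsup_after_booleanize (b := up h)) r3 _ _ r => [y | x y xy].
    exact/r1/le_refl.
  exact: proj2 (hH _ _ xy).
- apply: (lsup_after_booleanize (R := >%R) (b := lo h)) r4 _ _ r => [y | x y xy].
    by rewrite f_meetC; exact/r1/le_refl.
  exact: proj1 (hH _ _ xy).
Qed.

Lemma Cbar_to_HbarK : cancel Cbar_to_Hbar Hbar_to_Cbar.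
Proof.
case=> g gC; apply: sig_val_inj => /=; case: gC => [[_ r3 r4] _].
apply: genmap_ext => r /=.
  exact: booleanize_lsup_after r3 r.
exact: booleanize_lsup_after r4 r.
Qed.

Lemma Hbar_to_Cbar_mono (x y : Hbar L) :
  Hbar_le x y -> Cbar_le (Hbar_to_Cbar x) (Hbar_to_Cbar y).
Proof. by case=> lo_le up_le; split=> r; apply: f_pcpc_mono. Qed.

Lemma Cbar_to_Hbar_mono (x y : Cbar B) :
  Cbar_le x y -> Hbar_le (Cbar_to_Hbar x) (Cbar_to_Hbar y).
Proof. by case=> lo_le up_le; split=> r; apply: lsup_after_mono. Qed.

End Isomorphism.

Theorem proposition3p9 (L : Frame) :
  order_iso (@Hbar_le L) (@Cbar_le (Booleanization L)).
Proof.
exists (@Hbar_to_Cbar L), (@Cbar_to_Hbar L).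
split; [exact: Hbar_to_CbarK | exact: Cbar_to_HbarK | move=> x y; split].
  exact: Hbar_to_Cbar_mono.
by move=> le_xy; rewrite -(Hbar_to_CbarK x) -(Hbar_to_CbarK y); exact: Cbar_to_Hbar_mono.
Qed.
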